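(* Let $X$, $Y$ be normed vector spaces, let $f\colon X\to Y$ be continuously open at $x^*\in X$, and let $K$ be a compact neighborhood of $x^*$. Then $$\sup_{x\in K}\|f(x)\|\ \ge\ \|f(x^* )\|+\Gamma_{f(x^* )}\Big(f\big(\mathbb{B}_{\Gamma_{x^*}(K)}(x^* )\big)\Big).$$
   Context: $\mathbb{B}_r(x)$ denotes the open ball of radius $r$ centered at $x$. For metric spaces $X,Y$ and $x\in X$, $f$ is continuously open at $x$ if there is a continuous, positive definite (i.e. $g(0)=0$, $g(r)>0$ for $r>0$), monotonically increasing function $g$ with $\mathbb{B}_{g(r)}(f(x))\subseteq f(\mathbb{B}_r(x))$ for all sufficiently small $r>0$. For a normed space $Z$, $z^*\in Z$ and $K\subseteq Z$, the inradius of $K$ at $z^*$ is $\Gamma_{z^*}(K)=\sup\{r\ge0:\mathbb{B}_r(z^* )\subseteq K\}$. *)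

From HB Require Import structures.
From mathcomp Require Import all_boot all_order all_algebra.
From mathcomp Require Import all_classical all_reals all_analysis.
Set Implicit Arguments. Unset Strict Implicit. Unset Printing Implicit Defensive.
Import Order.TTheory GRing.Theory Num.Theory.
Import numFieldNormedType.Exports.
Local Open Scope classical_set_scope.
Local Open Scope ring_scope.

(* Open ball B_r(x) = {y | ||x - y|| < r} with an extended-real radius
   (needed because an inradius may be +oo). For finite r this is [ball x r]. *)
Definition eball (R : realType) (V : normedModType R) (x : V) (r : \bar R)
  : set V := [set y | ((`|x - y|)%:E < r)%E].

Definition inradius (R : realType) (V : normedModType R) (z : V) (K : set V)
  : \bar R := ereal_sup [set r%:E | r in [set r : R | 0 <= r /\ ball z r `<=` K]].

Definition continuously_open_at (R : realType) (X Y : normedModType R)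
  (f : X -> Y) (x : X) : Prop :=
  exists g : R -> R,
    [/\ continuous g, g 0 = 0, (forall r, 0 < r -> 0 < g r),
        {homo g : a b / a <= b} &
        exists2 delta : R, 0 < delta &
          forall r, 0 < r -> r < delta -> ball (f x) (g r) `<=` f @` ball x r].

(** If the ball of radius [r] around [y] lies in [A], then [A] contains the
    points [(|y| + s) u], [0 <= s < r], where [u] is a unit vector with
    [y = |y| u]; hence [sup_A |.| >= |y| + r], and so
    [sup_A |.| >= |y| + Gamma_y(A)] whenever [y] is in [A].  Applied to
    [A = f(K)], which contains [f(B_{Gamma_xs(K)}(xs))], this gives the
    claim, since the inradius grows with the set. *)

From HB Require Import structures.
From mathcomp Require Import all_boot all_order all_algebra.
From mathcomp Require Import all_classical all_reals all_analysis.
Import Order.TTheory GRing.Theory Num.Theory.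
Import numFieldNormedType.Exports.
Local Open Scope classical_set_scope.
Local Open Scope ring_scope.

Section Inradius.
Context {R : realType} {V : normedModType R}.
Implicit Types (y z : V) (A B : set V).

Lemma eball_inradius_sub z A : eball z (inradius z A) `<=` A.
Proof.
move=> y /ereal_sup_gt [_ [r [_ brA] <-]]; rewrite lte_fin => zyr.
by apply: brA; rewrite -ball_normE.
Qed.

Lemma le_inradius z : {homo inradius z : A B / A `<=` B >-> (A <= B)%E}.
Proof.
move=> A B AB; apply/ereal_sup_le/image_subset => r [r0 brA].
by split=> //; apply: subset_trans AB.
Qed.

Lemma exists_norm1_scale (hV : exists v : V, v != 0) y :
  exists2 u : V, `|u| = 1 & y = `|y| *: u.
Proof.
have [->|y0] := eqVneq y 0.
  have [v v0] := hV; exists (`|v|^-1 *: v); last by rewrite normr0 scale0r.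
  by rewrite normrZ normfV normr_id mulVf ?normr_eq0.
exists (`|y|^-1 *: y); first by rewrite normrZ normfV normr_id mulVf ?normr_eq0.
by rewrite scalerA mulfV ?scale1r ?normr_eq0.
Qed.

Lemma ball_sub_sup_norm_ge (hV : exists v : V, v != 0) y A (r : R) :
  0 <= r -> A y -> ball y r `<=` A ->
  ((`|y| + r)%:E <= ereal_sup [set `|a|%:E | a in A])%E.
Proof.
move=> r0 Ay brA.
have sup_ge a : A a -> (`|a|%:E <= ereal_sup [set `|a|%:E | a in A])%E.
  by move=> Aa; apply: ereal_sup_ubound; exists a.
move: r0; rewrite le0r => /orP [/eqP ->|r_gt0]; first by rewrite addr0 sup_ge.
have [u u1 yu] := exists_norm1_scale hV y.
apply/lee_addgt0Pr => e e0.
pose s := Num.max 0 (r - e).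
have s_ge0 : 0 <= s by rewrite le_max lexx.
have A_ray : A ((`|y| + s) *: u).
  apply: brA; rewrite -ball_normE /= [X in X - _]yu -scalerBl normrZ u1 mulr1.
  by rewrite opprD addNKr normrN ger0_norm // gt_max r_gt0 gtrBl e0.
apply: le_trans (leeD2r _ (sup_ge _ A_ray)).
rewrite normrZ u1 mulr1 ger0_norm ?addr_ge0 // -EFinD lee_fin -addrA lerD2l.
by rewrite -lerBlDr le_max lexx orbT.
Qed.

Lemma norm_add_inradius_le_sup (hV : exists v : V, v != 0) y A : A y ->
  ((`|y|)%:E + inradius y A <= ereal_sup [set `|a|%:E | a in A])%E.
Proof.
move=> Ay; rewrite addeC -leeBrDr //.
apply: ge_ereal_sup => _ [r [r0 brA] <-].
by rewrite leeBrDr // -EFinD addrC ball_sub_sup_norm_ge.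
Qed.

End Inradius.

Theorem corollary1 (R : realType) (X Y : normedModType R) (f : X -> Y)
  (xs : X) (K : set X)
  (hY : exists y : Y, y != 0)
  (hf : continuously_open_at f xs)
  (hKc : compact K) (hKn : nbhs xs K) :
  (ereal_sup [set (`|f x|)%:E | x in K] >=
   (`|f xs|)%:E + inradius (f xs) (f @` eball xs (inradius xs K)))%E.
Proof.
have xsK : K xs := nbhs_singleton hKn.
have -> : [set (`|f x|)%:E | x in K] = [set (`|y|)%:E | y in f @` K].
  by rewrite image_comp.
apply: le_trans _ (norm_add_inradius_le_sup hY _ _ (imageP f xsK)).
apply: leeD2l; apply: le_inradius.
exact: image_subset (eball_inradius_sub _ _).
Qed.
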